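(* Let $\sigma_1\prec\dots\prec\sigma_m$ be sign strings, $\varphi\in\mathbb{R}$, and suppose $\gamma\in\mathscr{M}(Q)$ is $(\varphi,\varepsilon_j)$-quasicritical of type $\sigma_j$ for each $j\in[m]$, where $\varepsilon_j\in(0,\pi/4)$. Then $\varepsilon_{j+1}>2\varepsilon_j$ for each $j\in[m-1]$.
   Context: $[n]=\{1,\dots,n\}$; signs $\pm$ are identified with $\pm1$. A sign string is $\sigma:[l]\to\{\pm1\}$, $l\ge2$, with alternating consecutive values; $|\sigma|=l$; $\sigma_1\prec\sigma_2$ means $\sigma_1\neq\sigma_2$ and $\sigma_1=\sigma_2\circ f$ for some strictly increasing $f$. Fix $Q=(q,z)\in\mathbb{C}\times\mathbb{S}^1$, $z\ne-1$, $\theta_1\in(-\pi,\pi)$ with $e^{i\theta_1}=z$, and $r\ge2$. $\mathscr{M}(Q)$ is the space of regular $C^r$ curves $\gamma:[0,1]\to\mathbb{C}$ with $\gamma(0)=0$, unit tangent $\mathbf{t}_\gamma(0)=1$, $\gamma(1)=q$, $\mathbf{t}_\gamma(1)=z$, curvature $\kappa_\gamma\in(-1,1)$ everywhere, and $\theta_\gamma(1)=\theta_1$, where $\theta_\gamma$ is the continuous argument of $\mathbf{t}_\gamma$ with $\theta_\gamma(0)=0$. For $\varphi\in\mathbb{R}$ write $\varphi_\pm=\varphi\pm\pi/2$. Stretchability: for $\kappa_0\in(0,1)$ and $r_0,r_b\in\mathbb{R}$, $b>0$, let $F(u)=u/\sqrt{1-u^2}$ ($|u|<1$), $F=+\infty$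 for $u\ge1$, $-\infty$ for $u\le-1$; $g_\pm(x)=F(\pm\kappa_0x+r_0/\sqrt{1+r_0^2})$, $h_\pm(x)=F(\mp\kappa_0(x-b)+r_b/\sqrt{1+r_b^2})$; $\lambda_+$ (resp. $\lambda_-$) is the common real value of $g_+,h_+$ (resp. $g_-,h_-$) where their graphs meet, or $+\infty$ (resp. $-\infty$) if they do not. If $I\subset[0,1]$ is a closed interval and $\langle\mathbf{t}_\gamma(t),e^{i\psi}\rangle>0$ on $I$, then after translating and rotating by $-\psi$, $\gamma|_I$ is the graph $x\mapsto(x,y(x))$, $x\in[0,b]$; put $f=y'$, $r_0=f(0)$, $r_b=f(b)$. $\gamma|_I$ is $\kappa_0$-stretchable with respect to $e^{i\psi}$ if $|\kappa_\gamma|\le\kappa_0$ on $I$ and $0\in[\lambda_-,\lambda_+]$; it is stretchable with respect to $e^{i\psi}$ (or w.r.t. $\psi$) if it is $\kappa_0$-stretchable for some $\kappa_0\in(0,1)$. Quasicritical: for a sign string $\sigma$, $n=|\sigma|$, $\varphi\in\mathbb{R}$, $\varepsilon\in(0,\pi/4)$, $\gamma$ is $(\varphi,\varepsilon)$-quasicritical of type $\sigma$ if there are closed intervals $J_1<\dots<J_n$ in $[0,1]$ such that for each $k\in[n]$: (i) $\theta_\gamma(J_k)\subset(\varphi_-+2\varepsilon,\varphi_++\varepsilon)$ if $\sigma(k)=+$ and $\theta_\gamma(J_k)\subset(\varphi_--\varepsilon,\varphi_+-2\varepsilon)$ if $\sigma(k)=-$; (ii) $|\theta_\gamma(t)-\varphi|<\pi/2-2\varepsilon$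 for all $t\notin\operatorname{Int}(\bigcup_kJ_k)$; (iii) $J_k$ contains a closed subinterval $I_k$ with $|\theta_\gamma(t)-\varphi_{\sigma(k)}|<\varepsilon$ for all $t\in I_k$ and $\gamma|_{I_k}$ stretchable with respect to $\varphi_{\sigma(k)}$. *)

From Stdlib Require Import Reals Lra List.
Open Scope R_scope.

Inductive sgn : Set := splus | sminus.
Definition sgn_val (s : sgn) : R := match s with splus => 1 | sminus => -1 end.

(* a sign string sigma : [l] -> {+,-}, l >= 2, with alternating consecutive values;
   sigma(k) is  nth (k-1) sigma splus  (0-based list) *)
Definition sign_string (s : list sgn) : Prop :=
  (2 <= length s)%nat /\
  forall i : nat, (S i < length s)%nat -> nth i s splus <> nth (S i) s splus.

Definition sprec (s1 s2 : list sgn) : Prop :=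
  s1 <> s2 /\
  exists f : nat -> nat,
    (forall i, (i < length s1)%nat -> (f i < length s2)%nat) /\
    (forall i j, (i < j)%nat -> (j < length s1)%nat -> (f i < f j)%nat) /\
    (forall i, (i < length s1)%nat -> nth i s1 splus = nth (f i) s2 splus).

(* ---------- C^r curves on [0,1] ----------
   A plane curve gamma = (x,y) is given by families Dx, Dy : nat -> R -> R,
   where Dx 0 = x and Dx (k+1) is the derivative of Dx k on [0,1]
   (one-sided at the endpoints). *)
Definition deriv_within (f : R -> R) (a b t l : R) : Prop :=
  forall e, 0 < e -> exists d, 0 < d /\
    forall s, a <= s <= b -> s <> t -> Rabs (s - t) < d ->
      Rabs ((f s - f t) / (s - t) - l) < e.

Definition cont_within (f : R -> R) (a b t : R) : Prop :=
  forall e, 0 < e -> exists d, 0 < d /\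
    forall s, a <= s <= b -> Rabs (s - t) < d -> Rabs (f s - f t) < e.

Definition Cr_family (r : nat) (D : nat -> R -> R) : Prop :=
  (forall k t, (k < r)%nat -> 0 <= t <= 1 -> deriv_within (D k) 0 1 t (D (S k) t)) /\
  (forall t, 0 <= t <= 1 -> cont_within (D r) 0 1 t).

Definition speed (Dx Dy : nat -> R -> R) (t : R) : R :=
  sqrt (Dx 1%nat t ^ 2 + Dy 1%nat t ^ 2).

Definition tanx (Dx Dy : nat -> R -> R) (t : R) : R := Dx 1%nat t / speed Dx Dy t.
Definition tany (Dx Dy : nat -> R -> R) (t : R) : R := Dy 1%nat t / speed Dx Dy t.

Definition curv (Dx Dy : nat -> R -> R) (t : R) : R :=
  (Dx 1%nat t * Dy 2%nat t - Dy 1%nat t * Dx 2%nat t) / (speed Dx Dy t ^ 3).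

Definition is_arg (Dx Dy : nat -> R -> R) (theta : R -> R) : Prop :=
  (forall t, 0 <= t <= 1 -> cont_within theta 0 1 t) /\
  (forall t, 0 <= t <= 1 ->
     cos (theta t) = tanx Dx Dy t /\ sin (theta t) = tany Dx Dy t) /\
  theta 0 = 0.

(* gamma in M(Q), Q = (q, z), q = qx + i qy, z = e^{i th1}, with theta_gamma = theta *)
Definition in_MQ (r : nat) (qx qy th1 : R) (Dx Dy : nat -> R -> R) (theta : R -> R) : Prop :=
  Cr_family r Dx /\ Cr_family r Dy /\
  (forall t, 0 <= t <= 1 -> Dx 1%nat t <> 0 \/ Dy 1%nat t <> 0) /\
  Dx 0%nat 0 = 0 /\ Dy 0%nat 0 = 0 /\
  tanx Dx Dy 0 = 1 /\ tany Dx Dy 0 = 0 /\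
  Dx 0%nat 1 = qx /\ Dy 0%nat 1 = qy /\
  tanx Dx Dy 1 = cos th1 /\ tany Dx Dy 1 = sin th1 /\
  (forall t, 0 <= t <= 1 -> -1 < curv Dx Dy t < 1) /\
  is_arg Dx Dy theta /\ theta 1 = th1.

Inductive ext : Type := Fin (v : R) | PInf | NInf.

Definition ext_le (a b : ext) : Prop :=
  match a, b with
  | NInf, _ => True
  | _, PInf => True
  | Fin u, Fin v => u <= v
  | _, _ => False
  end.

Definition Fext (u : R) : ext :=
  if Rle_dec 1 u then PInf
  else if Rle_dec u (-1) then NInf
  else Fin (u / sqrt (1 - u ^ 2)).

Definition meet_value (g h : R -> ext) (dflt : ext) (L : ext) : Prop :=
  (exists x v, g x = Fin v /\ h x = Fin v /\ L = Fin v) \/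
  ((~ exists x v, g x = Fin v /\ h x = Fin v) /\ L = dflt).

Definition lam_plus (k0 r0 rb b : R) (L : ext) : Prop :=
  meet_value (fun x => Fext (k0 * x + r0 / sqrt (1 + r0 ^ 2)))
             (fun x => Fext (- k0 * (x - b) + rb / sqrt (1 + rb ^ 2))) PInf L.

Definition lam_minus (k0 r0 rb b : R) (L : ext) : Prop :=
  meet_value (fun x => Fext (- k0 * x + r0 / sqrt (1 + r0 ^ 2)))
             (fun x => Fext (k0 * (x - b) + rb / sqrt (1 + rb ^ 2))) NInf L.

(* Coordinates of gamma|_[a,c] after translating gamma(a) to 0 and rotating by -psi:
   X = <gamma - gamma(a), e^{i psi}>,  Y = <gamma - gamma(a), i e^{i psi}>.
   When <t_gamma, e^{i psi}> > 0 on [a,c], this is the graph x |-> (x, y(x)), x in [0,b],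
   with b = X(c) and f = y', so f(X(t)) = Y'(t)/X'(t). *)
Definition rotX (Dx Dy : nat -> R -> R) (psi a t : R) : R :=
  cos psi * (Dx 0%nat t - Dx 0%nat a) + sin psi * (Dy 0%nat t - Dy 0%nat a).
Definition graph_slope (Dx Dy : nat -> R -> R) (psi t : R) : R :=
  (- sin psi * Dx 1%nat t + cos psi * Dy 1%nat t) /
  (cos psi * Dx 1%nat t + sin psi * Dy 1%nat t).

Definition k0_stretchable (k0 : R) (Dx Dy : nat -> R -> R) (psi a c : R) : Prop :=
  (forall t, a <= t <= c -> Rabs (curv Dx Dy t) <= k0) /\
  (let b := rotX Dx Dy psi a c in
   let r0 := graph_slope Dx Dy psi a in
   let rb := graph_slope Dx Dy psi c in
   exists Lm Lp, lam_minus k0 r0 rb b Lm /\ lam_plus k0 r0 rb b Lp /\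
                 ext_le Lm (Fin 0) /\ ext_le (Fin 0) Lp).

Definition stretchable (Dx Dy : nat -> R -> R) (psi a c : R) : Prop :=
  0 <= a /\ a < c /\ c <= 1 /\
  (forall t, a <= t <= c -> cos psi * tanx Dx Dy t + sin psi * tany Dx Dy t > 0) /\
  exists k0, 0 < k0 < 1 /\ k0_stretchable k0 Dx Dy psi a c.

Definition in_interior (U : R -> Prop) (t : R) : Prop :=
  exists d, 0 < d /\ forall s, Rabs (s - t) < d -> U s.

(* gamma (with argument function theta) is (phi, eps)-quasicritical of type sigma.
   J_k = [a k, c k], I_k = [p k, q k], for k = 0, ..., n-1 (0-based). *)
Definition quasicritical (Dx Dy : nat -> R -> R) (theta : R -> R)
    (phi eps : R) (sigma : list sgn) : Prop :=
  let n := length sigma in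
  exists a c p q : nat -> R,
    (forall k, (k < n)%nat -> 0 <= a k <= c k /\ c k <= 1) /\
    (forall k, (S k < n)%nat -> c k < a (S k)) /\
    (forall k t, (k < n)%nat -> a k <= t <= c k ->
       match nth k sigma splus with
       | splus => phi - PI / 2 + 2 * eps < theta t < phi + PI / 2 + eps
       | sminus => phi - PI / 2 - eps < theta t < phi + PI / 2 - 2 * eps
       end) /\
    (forall t, 0 <= t <= 1 ->
       ~ in_interior (fun s => exists k, (k < n)%nat /\ a k <= s <= c k) t ->
       Rabs (theta t - phi) < PI / 2 - 2 * eps) /\
    (forall k, (k < n)%nat ->
       a k <= p k /\ p k <= q k /\ q k <= c k /\
       (forall t, p k <= t <= q k ->
          Rabs (theta t - (phi + sgn_val (nth k sigma splus) * (PI / 2))) < eps) /\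
       stretchable Dx Dy (phi + sgn_val (nth k sigma splus) * (PI / 2)) (p k) (q k)).

(* Suppose [eps (j+1) <= 2 eps j].  A point where theta is within [eps (j+1)] of
   [phi +- PI/2] is then too far from [phi] to lie outside the intervals of the
   [sig j] decomposition, and it cannot lie in an interval of the opposite sign.
   So the starting points of the [I_k] of [sig (j+1)] fall, in order and with
   matching signs, into the intervals of [sig j]; consecutive ones carry
   different signs, hence land in different intervals, so
   [length (sig (j+1)) <= length (sig j)].  But [sig j ≺ sig (j+1)] forces
   [length (sig j) < length (sig (j+1))]. *)
From Stdlib Require Import Reals Lra List Lia Classical.
Open Scope R_scope.

Section StrictlyIncreasingMaps.

Variables (n1 n2 : nat) (f : nat -> nat).
Hypothesis f_range : forall i, (i < n1)%nat -> (f i < n2)%nat.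
Hypothesis f_incr : forall i j, (i < j)%nat -> (j < n1)%nat -> (f i < f j)%nat.

Lemma incr_map_ge_index i : (i < n1)%nat -> (i <= f i)%nat.
Proof.
  induction i as [|i IH]; intros Hi; [lia|].
  assert (f i < f (S i))%nat by (apply f_incr; lia).
  specialize (IH ltac:(lia)); lia.
Qed.

Lemma incr_map_le_shift i : (i < n1)%nat -> (f i + n1 <= n2 + i)%nat.
Proof.
  intros Hi; remember (n1 - 1 - i)%nat as k eqn:Hk.
  revert i Hi Hk; induction k as [|k IH]; intros i Hi Hk.
  - assert (f i < n2)%nat by (apply f_range; lia); lia.
  - specialize (IH (S i) ltac:(lia) ltac:(lia)).
    assert (f i < f (S i))%nat by (apply f_incr; lia); lia.
Qed.

End StrictlyIncreasingMaps.

Lemma sprec_length_lt (s1 s2 : list sgn) :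
  sprec s1 s2 -> (length s1 < length s2)%nat.
Proof.
  intros [Hneq [f [Hrange [Hincr Hnth]]]].
  destruct (Nat.lt_ge_cases (length s1) (length s2)) as [Hlt|Hge]; [exact Hlt|].
  exfalso; apply Hneq.
  assert (Hid : forall i, (i < length s1)%nat -> f i = i).
  { intros i Hi.
    pose proof (incr_map_ge_index _ _ Hincr i Hi).
    pose proof (incr_map_le_shift _ _ _ Hrange Hincr i Hi); lia. }
  assert (Hlen : length s1 = length s2).
  { destruct (length s1) as [|n] eqn:E; [simpl in *; lia|].
    pose proof (Hrange n ltac:(lia)); pose proof (Hid n ltac:(lia)); lia. }
  apply nth_ext with splus splus; [exact Hlen|].
  intros i Hi; rewrite Hnth, Hid by exact Hi; reflexivity.
Qed.

Section OrderedIntervals.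

Variables (a c : nat -> R) (n : nat).
Hypothesis interval_nonempty : forall k, (k < n)%nat -> a k <= c k.
Hypothesis interval_before_next : forall k, (S k < n)%nat -> c k < a (S k).

Lemma intervals_ordered i i' : (i < i')%nat -> (i' < n)%nat -> c i < a i'.
Proof.
  intros Hii'; induction Hii' as [|i' Hle IH]; intros Hi'.
  - apply interval_before_next; exact Hi'.
  - specialize (IH ltac:(lia)).
    pose proof (interval_nonempty i' ltac:(lia)).
    pose proof (interval_before_next i' Hi'); lra.
Qed.

Lemma interval_index_le x y i i' :
  (i < n)%nat -> a i <= x <= c i -> a i' <= y <= c i' -> x <= y -> (i <= i')%nat.
Proof.
  intros Hi Hx Hy Hxy.
  destruct (Nat.le_gt_cases i i') as [Hle|Hgt]; [exact Hle|].
  pose proof (intervals_ordered i' i Hgt Hi); lra.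
Qed.

Lemma alternating_points_length_le (s1 s2 : list sgn) (t : nat -> R) :
  (forall k, (S k < length s2)%nat -> t k <= t (S k)) ->
  (forall k, (S k < length s2)%nat -> nth k s2 splus <> nth (S k) s2 splus) ->
  (forall k, (k < length s2)%nat -> exists i, (i < n)%nat /\
     a i <= t k <= c i /\ nth i s1 splus = nth k s2 splus) ->
  (length s2 <= n)%nat.
Proof.
  intros Ht_mono Halt Hin.
  assert (Hindex : forall k, (k < length s2)%nat -> exists i, (k <= i)%nat /\
            (i < n)%nat /\ a i <= t k <= c i /\ nth i s1 splus = nth k s2 splus).
  { induction k as [|k IH]; intros Hk.
    - destruct (Hin 0%nat Hk) as [i Hi]; exists i; split; [lia|exact Hi].
    - destruct (IH ltac:(lia)) as [i [Hki [Hi [Hti Hsi]]]].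
      destruct (Hin (S k) Hk) as [i' [Hi' [Hti' Hsi']]].
      assert (Hle : (i <= i')%nat) by (apply (interval_index_le (t k) (t (S k)));
                                      auto; apply Ht_mono; exact Hk).
      assert (Hne : i <> i').
      { intros ->; apply (Halt k Hk); congruence. }
      exists i'; split; [lia|auto]. }
  destruct (length s2) as [|k] eqn:E; [lia|].
  destruct (Hindex k ltac:(lia)) as [i [Hki [Hi _]]]; lia.
Qed.

End OrderedIntervals.

Section QuasicriticalIntervals.

Variables (theta : R -> R) (phi e : R) (sigma : list sgn) (a c : nat -> R).
Hypothesis theta_on_intervals : forall k t, (k < length sigma)%nat -> a k <= t <= c k ->
  match nth k sigma splus with
  | splus => phi - PI / 2 + 2 * e < theta t < phi + PI / 2 + e
  | sminus => phi - PI / 2 - e < theta t < phi + PI / 2 - 2 * e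
  end.
Hypothesis theta_off_intervals : forall t, 0 <= t <= 1 ->
  ~ in_interior (fun s => exists k, (k < length sigma)%nat /\ a k <= s <= c k) t ->
  Rabs (theta t - phi) < PI / 2 - 2 * e.

Lemma near_critical_in_interval (e' : R) (s : sgn) (t : R) :
  e' <= 2 * e -> 0 <= t <= 1 ->
  Rabs (theta t - (phi + sgn_val s * (PI / 2))) < e' ->
  exists i, (i < length sigma)%nat /\ a i <= t <= c i /\ nth i sigma splus = s.
Proof.
  intros He' Ht Hnear.
  assert (Hint : in_interior
            (fun s => exists k, (k < length sigma)%nat /\ a k <= s <= c k) t).
  { apply NNPP; intros Hout.
    pose proof (theta_off_intervals t Ht Hout) as Hfar.
    apply Rabs_def2 in Hfar; apply Rabs_def2 in Hnear.
    destruct s; simpl in Hnear; lra. }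
  destruct Hint as [d [Hd Hball]].
  destruct (Hball t) as [i [Hi Hti]]; [rewrite Rminus_diag, Rabs_R0; exact Hd|].
  exists i; repeat split; auto; try lra.
  pose proof (theta_on_intervals i t Hi Hti) as Hsign.
  apply Rabs_def2 in Hnear.
  destruct (nth i sigma splus), s; simpl in Hnear; auto; lra.
Qed.

End QuasicriticalIntervals.

Lemma quasicritical_length_le (Dx Dy : nat -> R -> R) (theta : R -> R)
    (phi e1 e2 : R) (s1 s2 : list sgn) :
  e2 <= 2 * e1 ->
  (forall k, (S k < length s2)%nat -> nth k s2 splus <> nth (S k) s2 splus) ->
  quasicritical Dx Dy theta phi e1 s1 ->
  quasicritical Dx Dy theta phi e2 s2 ->
  (length s2 <= length s1)%nat.
Proof.
  intros He Halt (a1 & c1 & p1 & q1 & H1J & H1sep & H1i & H1ii & _)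
                 (a2 & c2 & p2 & q2 & H2J & H2sep & _ & _ & H2iii).
  apply (alternating_points_length_le a1 c1 _ (fun k Hk => proj2 (proj1 (H1J k Hk))) H1sep
           s1 s2 p2); [|exact Halt|].
  - intros k Hk.
    destruct (H2iii k ltac:(lia)) as (_ & Hpq & Hqc & _).
    destruct (H2iii (S k) Hk) as (Hap & _).
    pose proof (H2sep k Hk); lra.
  - intros k Hk.
    destruct (H2J k Hk) as [[Ha _] Hc].
    destruct (H2iii k Hk) as (Hap & Hpq & Hqc & Hnear & _).
    apply (near_critical_in_interval theta phi e1 s1 a1 c1 H1i H1ii e2);
      [exact He|lra|apply Hnear; lra].
Qed.

Theorem lemma3p7 (r : nat) (qx qy th1 : R) (Dx Dy : nat -> R -> R) (theta : R -> R)
    (m : nat) (sig : nat -> list sgn) (phi : R) (eps : nat -> R) :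
  (2 <= r)%nat ->
  - PI < th1 < PI ->
  in_MQ r qx qy th1 Dx Dy theta ->
  (forall j, (j < m)%nat -> sign_string (sig j)) ->
  (forall j, (S j < m)%nat -> sprec (sig j) (sig (S j))) ->
  (forall j, (j < m)%nat -> 0 < eps j < PI / 4) ->
  (forall j, (j < m)%nat -> quasicritical Dx Dy theta phi (eps j) (sig j)) ->
  forall j, (S j < m)%nat -> eps (S j) > 2 * eps j.
Proof.
  intros _ _ _ Hsign Hprec _ Hqc j Hj.
  apply Rnot_le_gt; intros Hle.
  destruct (Hsign (S j) Hj) as [_ Halt].
  pose proof (sprec_length_lt _ _ (Hprec j Hj)).
  pose proof (quasicritical_length_le Dx Dy theta phi (eps j) (eps (S j))
                (sig j) (sig (S j)) Hle Halt (Hqc j ltac:(lia)) (Hqc (S j) Hj)).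
  lia.
Qed.
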